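(* Let $H$ be a finite-dimensional Hopf algebra over a field $\Bbbk$ (algebraically closed of characteristic zero) and $A$ a Hopf subalgebra of $H$. Suppose $H=A\oplus C$ as coalgebras for some subcoalgebra $C$ of $H$. Then $H$ and $A$ have the same distinguished group-like element.
   Context: The distinguished group-like element of a finite-dimensional Hopf algebra $H$ is the $a\in G(H)$ with $\lambda(h_2)h_1=\lambda(h)\,a$ for all $h\in H$, where $\lambda$ is a nonzero right integral of $H^*$. *)

(* Finite-dimensional Hopf algebras encoded by structure
   constants with respect to a fixed basis e_0, ..., e_(n-1).
   Elements of H are row vectors 'rV[F]_n (coordinates in the basis);
   elements of H (x) H are matrices T : 'M[F]_n, T i j being the coefficient
   of e_i (x) e_j; linear functionals on H are column vectors 'cV[F]_n;
   subspaces of H are row spaces of matrices 'M[F]_n (mxalgebra, %MS). *)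
From HB Require Import structures.
From mathcomp Require Import all_boot all_order all_algebra.
Set Implicit Arguments. Unset Strict Implicit. Unset Printing Implicit Defensive.
Import GRing.Theory.
Local Open Scope ring_scope.

Section Hopf.
Variables (F : fieldType) (n : nat).

(* Structure constants: e_i e_j = mulc i j, 1 = unitH, Delta(e_i) = comulc i,
   eps(x) = x *m counitH, S(x) = x *m antipH. *)
Record HopfData := {
  mulc : 'I_n -> 'I_n -> 'rV[F]_n;
  unitH : 'rV[F]_n;
  comulc : 'I_n -> 'M[F]_n;
  counitH : 'cV[F]_n;
  antipH : 'M[F]_n }.

Variable H : HopfData.

Definition ebasis (i : 'I_n) : 'rV[F]_n := delta_mx 0 i.
Definition hmul (x y : 'rV[F]_n) : 'rV[F]_n :=
  \sum_i \sum_j (x 0 i * y 0 j) *: mulc H i j.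
Definition comul (x : 'rV[F]_n) : 'M[F]_n := \sum_i x 0 i *: comulc H i.
Definition ev (f : 'cV[F]_n) (x : 'rV[F]_n) : F := (x *m f) 0 0.
Definition counit (x : 'rV[F]_n) : F := ev (counitH H) x.
Definition antipode (x : 'rV[F]_n) : 'rV[F]_n := x *m antipH H.
Definition tens (x y : 'rV[F]_n) : 'M[F]_n := x^T *m y.
(* product in the algebra H (x) H *)
Definition tmul (T U : 'M[F]_n) : 'M[F]_n :=
  \matrix_(a, b) \sum_i \sum_j \sum_k \sum_l
     (T i j * U k l * (mulc H i k 0 a * mulc H j l 0 b)).
(* m o (f (x) g) applied to a tensor *)
Definition mulmap (f g : 'rV[F]_n -> 'rV[F]_n) (T : 'M[F]_n) : 'rV[F]_n :=
  \sum_i \sum_j T i j *: hmul (f (ebasis i)) (g (ebasis j)).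
(* coordinates of (Delta (x) id) T and (id (x) Delta) T in H (x) H (x) H *)
Definition coass_l (T : 'M[F]_n) (a b c : 'I_n) : F :=
  \sum_j T j c * comulc H j a b.
Definition coass_r (T : 'M[F]_n) (a b c : 'I_n) : F :=
  \sum_j T a j * comulc H j b c.

Definition is_hopf : Prop :=
  (forall x y z, hmul (hmul x y) z = hmul x (hmul y z)) /\
  (forall x, hmul (unitH H) x = x /\ hmul x (unitH H) = x) /\
  (forall x a b c, coass_l (comul x) a b c = coass_r (comul x) a b c) /\
  (forall x, (counitH H)^T *m comul x = x /\ (comul x *m counitH H)^T = x) /\
  (forall x y, comul (hmul x y) = tmul (comul x) (comul y)) /\
  comul (unitH H) = tens (unitH H) (unitH H) /\
  (forall x y, counit (hmul x y) = counit x * counit y) /\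
  counit (unitH H) = 1 /\
  (forall x, mulmap antipode id (comul x) = counit x *: unitH H /\
             mulmap id antipode (comul x) = counit x *: unitH H).

(* T lies in V (x) W (span of the v (x) w, v a row of V, w a row of W) *)
Definition in_tensor (V W : 'M[F]_n) (T : 'M[F]_n) : Prop :=
  exists X : 'M[F]_n, T = V^T *m X *m W.

Definition subcoalgebra (C : 'M[F]_n) : Prop :=
  forall x, (x <= C)%MS -> in_tensor C C (comul x).

Definition hopf_subalgebra (A : 'M[F]_n) : Prop :=
  (unitH H <= A)%MS /\
  (forall x y, (x <= A)%MS -> (y <= A)%MS -> (hmul x y <= A)%MS) /\
  subcoalgebra A /\
  (forall x, (x <= A)%MS -> (antipode x <= A)%MS).

(* Notions relative to a Hopf subalgebra V of H (V = 1%:M gives H itself).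
   Functionals on V are represented by functionals on H, only their values
   on V matter (every functional on V extends to H). *)
Definition grouplike (V : 'M[F]_n) (g : 'rV[F]_n) : Prop :=
  (g <= V)%MS /\ g != 0 /\ comul g = tens g g.

(* lambda is a nonzero right integral of V^* : lambda * f = f(1) lambda for
   every f in V^*, the product being convolution. *)
Definition right_integral (V : 'M[F]_n) (lam : 'cV[F]_n) : Prop :=
  (exists2 v, (v <= V)%MS & ev lam v != 0) /\
  (forall (f : 'cV[F]_n) (v : 'rV[F]_n), (v <= V)%MS ->
     (lam^T *m comul v *m f) 0 0 = ev f (unitH H) * ev lam v).

(* a is the distinguished group-like element of V:
   a in G(V) and lambda(h_2) h_1 = lambda(h) a for all h in V. *)
Definition dist_grouplike (V : 'M[F]_n) (a : 'rV[F]_n) : Prop :=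
  grouplike V a /\
  exists lam : 'cV[F]_n, right_integral V lam /\
    forall v, (v <= V)%MS -> (comul v *m lam)^T = ev lam v *: a.

End Hopf.

(* Since H = A (+) C as coalgebras, the projection P of H onto A along C is a
   coalgebra map: Delta (h P) = (P (x) id) (Delta h) = (id (x) P) (Delta h).
   A right integral lambda of H vanishes on C: for h in C,
   lambda(h) = lambda(h_1) eps(h_2) = lambda(h_1) (eps o (1 - P))(h_2), and the
   functional eps o (1 - P) kills 1 in A.  So lambda restricts to a right
   integral of A, and conversely a right integral of A extends to H as
   lambda o P.  In both directions lambda(h_2) h_1 is computed inside A, so the
   two distinguished group-like elements coincide. *)
From HB Require Import structures.
From mathcomp Require Import all_boot all_order all_algebra.
Import GRing.Theory.
Local Open Scope ring_scope.

Section Coalgebra.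
Context {F : fieldType} {n : nat} {H : HopfData F n}.

Lemma comulD (x y : 'rV[F]_n) : comul H (x + y) = comul H x + comul H y.
Proof. by rewrite /comul -big_split; apply: eq_bigr => i _; rewrite mxE scalerDl. Qed.

Lemma comul0 : comul H 0 = 0.
Proof. by apply: (addrI (comul H 0)); rewrite -comulD !addr0. Qed.

Lemma evD (f : 'cV[F]_n) (x y : 'rV[F]_n) : ev f (x + y) = ev f x + ev f y.
Proof. by rewrite /ev mulmxDl mxE. Qed.

Lemma comul_mulmx_sub {V : 'M[F]_n} {v : 'rV[F]_n} (f : 'cV[F]_n) :
  subcoalgebra H V -> (v <= V)%MS -> ((comul H v *m f)^T <= V)%MS.
Proof.
move=> coV /coV [X ->].
by rewrite -!mulmxA trmx_mul trmxK submxMl.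
Qed.

End Coalgebra.

Section DirectSum.
Context {F : fieldType} {n : nat} {H : HopfData F n} {A C : 'M[F]_n}.
Hypotheses (AC0 : (A :&: C = 0)%MS) (AC1 : (1%:M <= A + C)%MS).
Hypotheses (coA : subcoalgebra H A) (coC : subcoalgebra H C).

Local Notation P := (proj_mx A C).

Let sub_sum (w : 'rV[F]_n) : (w <= A + C)%MS := submx_trans (submx1 w) AC1.

Lemma comul_proj_mxr (w : 'rV[F]_n) : comul H (w *m P) = comul H w *m P.
Proof.
have [X EA] := coA _ (proj_mx_sub A C w).
have [Y EC] := coC _ (proj_mx_sub C A w).
rewrite -{2}(add_proj_mx AC0 (sub_sum w)) comulD mulmxDl EA EC.
by rewrite -!mulmxA proj_mx_id // proj_mx_0 // !mulmx0 addr0.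
Qed.

Lemma comul_proj_mxl (w : 'rV[F]_n) : comul H (w *m P) = P^T *m comul H w.
Proof.
have [X EA] := coA _ (proj_mx_sub A C w).
have [Y EC] := coC _ (proj_mx_sub C A w).
rewrite -{2}(add_proj_mx AC0 (sub_sum w)) comulD mulmxDr EA EC.
by rewrite !mulmxA -!trmx_mul proj_mx_id // proj_mx_0 // trmx0 !mul0mx addr0.
Qed.

Lemma ev_proj_mx (lam : 'cV[F]_n) (w : 'rV[F]_n) :
  ev (P *m lam) w = ev lam (w *m P).
Proof. by rewrite /ev mulmxA. Qed.

Lemma right_integral_proj (lam : 'cV[F]_n) :
  right_integral H A lam -> right_integral H 1%:M (P *m lam).
Proof.
case=> [[v vA lamv] lamI]; split.
  by exists v; rewrite ?submx1 // ev_proj_mx proj_mx_id.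
move=> f w _; rewrite ev_proj_mx trmx_mul -(mulmxA lam^T) -comul_proj_mxl.
exact/lamI/proj_mx_sub.
Qed.

Lemma dist_grouplike_ext (a : 'rV[F]_n) :
  dist_grouplike H A a -> dist_grouplike H 1%:M a.
Proof.
case=> [[_ ga] [lam [lamR lamD]]]; split; first by split; rewrite ?submx1.
exists (P *m lam); split; first exact: right_integral_proj.
by move=> w _; rewrite ev_proj_mx mulmxA -comul_proj_mxr; apply/lamD/proj_mx_sub.
Qed.

Hypotheses (unitA : (unitH H <= A)%MS)
           (comul_counitr : forall x, (comul H x *m counitH H)^T = x).

Lemma right_integral_eq0_compl (lam : 'cV[F]_n) (w : 'rV[F]_n) :
  right_integral H 1%:M lam -> (w <= C)%MS -> ev lam w = 0.
Proof.
case=> _ lamI wC.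
set f := (1%:M - P) *m counitH H.
have f1 : ev f (unitH H) = 0.
  by rewrite /ev mulmxA mulmxBr mulmx1 proj_mx_id // subrr mul0mx mxE.
have f_counit : comul H w *m f = comul H w *m counitH H.
  by rewrite mulmxA mulmxBr mulmx1 -comul_proj_mxr proj_mx_0 // comul0 subr0.
have := lamI f w (submx1 w); rewrite f1 mul0r -mulmxA f_counit.
by rewrite -[_ *m counitH H]trmxK comul_counitr -trmx_mul mxE.
Qed.

Lemma ev_proj_eq (lam : 'cV[F]_n) (w : 'rV[F]_n) :
  (forall u, (u <= C)%MS -> ev lam u = 0) -> ev lam w = ev lam (w *m P).
Proof.
move=> lamC; rewrite -{1}(add_proj_mx AC0 (sub_sum w)) evD.
by rewrite (lamC (w *m proj_mx C A)) ?addr0 ?proj_mx_sub.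
Qed.

Lemma dist_grouplike_restrict (a : 'rV[F]_n) :
  dist_grouplike H 1%:M a -> dist_grouplike H A a.
Proof.
case=> [[_ ga] [lam [lamR lamD]]].
have lamC u := @right_integral_eq0_compl lam u lamR.
have [[v _ lamv] lamI] := lamR.
have lamvA : ev lam (v *m P) != 0 by rewrite -ev_proj_eq.
have aA : (a <= A)%MS.
  have := comul_mulmx_sub lam coA (proj_mx_sub A C v).
  by rewrite lamD ?submx1 // eqmx_scale.
split; first by split.
exists lam; split; last by move=> w _; apply/lamD/submx1.
split; first by exists (v *m P); rewrite ?proj_mx_sub.
by move=> f w _; apply/lamI/submx1.
Qed.

End DirectSum.

Theorem lemma2p4 (F : closedFieldType) (charF : [pchar F] =i pred0)
  (n : nat) (H : HopfData F n) (hH : is_hopf H)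
  (A C : 'M[F]_n) (hA : hopf_subalgebra H A) (hC : subcoalgebra H C)
  (hsum : (A + C == 1%:M)%MS) (hdir : (A :&: C == (0 : 'M[F]_n))%MS) :
  forall a : 'rV[F]_n, dist_grouplike H 1%:M a <-> dist_grouplike H A a.
Proof.
move=> a.
have AC0 : (A :&: C = 0)%MS by apply/eqmx0P.
have AC1 : (1%:M <= A + C)%MS by case/andP: hsum.
have [unitA [_ [coA _]]] := hA.
have [_ [_ [_ [counit_law _]]]] := hH.
have comul_counitr x : (comul H x *m counitH H)^T = x by case: (counit_law x).
split=> [dist1 | distA].
  exact: dist_grouplike_restrict AC0 AC1 coA hC unitA comul_counitr a dist1.
exact: dist_grouplike_ext AC0 AC1 coA hC a distA.
Qed.
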